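(* The orbit space $\mathbb{R}P^5/\mathbb{Z}_2^4$ is homeomorphic to the join $S^2\ast\mathbb{R}P^2$.
   Context: The group $\mathbb{Z}_2^4=\{\pm1\}^4$ acts on $\mathbb{R}P^5$, with homogeneous coordinates $[x_{12}:x_{13}:x_{14}:x_{23}:x_{24}:x_{34}]$, by $x_{ij}\mapsto\epsilon_i\epsilon_jx_{ij}$, i.e. via the composition of the second symmetric power $\mathbb{Z}_2^4\to\mathbb{Z}_2^6$ with the canonical coordinatewise action of $\mathbb{Z}_2^6$ on $\mathbb{R}P^5$. *)

From HB Require Import structures.
From mathcomp Require Import all_boot all_order all_algebra generic_quotient.
From mathcomp Require Import all_classical all_reals all_analysis.
From mathcomp Require Import subtype_topology quotient_topology.

Set Implicit Arguments.
Unset Strict Implicit.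
Unset Printing Implicit Defensive.

Import Order.TTheory GRing.Theory Num.Theory.
Local Open Scope classical_set_scope.
Local Open Scope ring_scope.
Local Open Scope quotient_scope.

Section GenQuot.
Context {T : topologicalType} (r : T -> T -> Prop).

Definition eqclos (x y : T) : Prop :=
  forall e : T -> T -> Prop,
    (forall a b, r a b -> e a b) ->
    (forall a, e a a) ->
    (forall a b, e a b -> e b a) ->
    (forall a b c, e a b -> e b c -> e a c) -> e x y.

Definition eqclosb (x y : T) : bool := `[< eqclos x y >].

Lemma eqclosb_refl : reflexive eqclosb.
Proof. by move=> x; apply/asboolP => e _ hr _ _; exact: hr. Qed.

Lemma eqclosb_sym : symmetric eqclosb.
Proof.
have H : forall x y, eqclosb x y -> eqclosb y x.
  move=> x y /asboolP h; apply/asboolP => e h1 h2 h3 h4.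
  by apply: (h3); exact: (h e h1 h2 h3 h4).
by move=> x y; apply/idP/idP; exact: H.
Qed.

Lemma eqclosb_trans : transitive eqclosb.
Proof.
move=> y x z /asboolP h1 /asboolP h2; apply/asboolP => e a b c d.
by apply: (d _ y); [exact: (h1 e a b c d)|exact: (h2 e a b c d)].
Qed.

Definition eqclos_rel := EquivRel eqclosb eqclosb_refl eqclosb_sym eqclosb_trans.

Definition gquot := {eq_quot eqclos_rel}.
HB.instance Definition _ := Topological.copy gquot (quotient_topology gquot).
HB.instance Definition _ := Quotient.on gquot.
End GenQuot.

Definition homeomorphic (X Y : topologicalType) : Prop :=
  exists (f : X -> Y) (g : Y -> X),
    [/\ continuous f, continuous g, cancel f g & cancel g f].

Unset Implicit Arguments.
Section Spaces.
Variable R : realType.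

Definition Rn (n : nat) : normedModType R := 'rV[R]_n.

(* unit sphere S^{n-1} in R^n (Euclidean norm), with subspace topology *)
Definition sphere_set (n : nat) : set (Rn n) :=
  [set x | \sum_(i < n) x ord0 i ^+ 2 = 1].
Definition sphere (n : nat) : topologicalType := set_type (sphere_set n).

(* real projective space RP^{n-1} = S^{n-1} / (x ~ -x) *)
Definition RP (n : nat) : topologicalType :=
  gquot (fun x y : sphere n => \val y = - \val x).

(* coordinates x_{ij}, i<j in {0..3}, of R^6 in the order
   x01, x02, x03, x12, x13, x23 *)
Definition pair_fst (k : 'I_6) : 'I_4 :=
  inord (nth 0%N [:: 0; 0; 0; 1; 1; 2]%N k).
Definition pair_snd (k : 'I_6) : 'I_4 :=
  inord (nth 0%N [:: 1; 2; 3; 2; 3; 3]%N k).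

(* element eps of Z_2^4 = {+-1}^4 encoded as eps : {ffun 'I_4 -> bool},
   eps_i = (-1)^(eps i) *)
Definition sgn (eps : {ffun 'I_4 -> bool}) (i : 'I_4) : R := (-1) ^+ eps i.

Definition act_vec (eps : {ffun 'I_4 -> bool}) (x : Rn 6) : Rn 6 :=
  \row_k (sgn eps (pair_fst k) * sgn eps (pair_snd k) * x ord0 k).

Definition act_rel (q q' : RP 6) : Prop :=
  exists (eps : {ffun 'I_4 -> bool}) (x y : sphere 6),
    [/\ \pi_(RP 6) x = q, \pi_(RP 6) y = q' & \val y = act_vec eps (\val x)].

Definition orbit_space : topologicalType := gquot act_rel.

Definition unit_interval_set : set R^o := [set t : R | 0 <= t <= 1].
Definition unit_interval : topologicalType := set_type unit_interval_set.

Definition join_rel (X Y : topologicalType)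
    (a b : (X * (Y * unit_interval))%type) : Prop :=
  (\val a.2.2 = 0 /\ \val b.2.2 = 0 /\ a.1 = b.1) \/
  (\val a.2.2 = 1 /\ \val b.2.2 = 1 /\ a.2.1 = b.2.1).

Definition join (X Y : topologicalType) : topologicalType :=
  gquot (@join_rel X Y).

End Spaces.

(* Group the coordinates of RP^5 into the complementary pairs (x01, x23), (x02, x13),
   (x03, x12) and read each pair as a complex number z_k = p_k + i q_k.  An element
   eps of Z_2^4 multiplies p_k and q_k by two signs whose product eps0 eps1 eps2 eps3
   does not depend on k, so eps sends every z_k to +-z_k, or every z_k to +-conj z_k.
   Hence the real parts A_k of the squares z_k^2 are invariant, their imaginary parts
   B_k change by a common sign, and the pair (A, B B^T) determines the orbit of +-x.
   Normalised by N = sum |z_k|^4 this is a continuous injection of RP^5/Z_2^4 into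
   R^3 x Sym_3 = R^9, whose image is the image of the continuous injection
   (a, [b], t) |-> (sqrt(1 - t) a, t b b^T) of S^2 * RP^2 (with t = |B|^2 / N).
   Both spaces are compact and R^9 is Hausdorff, so they are homeomorphic. *)

From HB Require Import structures.
From mathcomp Require Import all_boot all_order all_algebra generic_quotient.
From mathcomp Require Import all_classical all_reals all_analysis.
From mathcomp Require Import subtype_topology quotient_topology.
From mathcomp Require Import ring lra.
Set Implicit Arguments.
Unset Strict Implicit.
Unset Printing Implicit Defensive.
Import Order.TTheory GRing.Theory Num.Theory.
Import numFieldTopology.Exports numFieldNormedType.Exports.
Local Open Scope classical_set_scope.
Local Open Scope ring_scope.
Local Open Scope quotient_scope.

Section GeneratedQuotient.
Context {T : topologicalType} (r : T -> T -> Prop).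
Local Notation Q := (gquot r).

Lemma gquot_pi_eq a b : r a b -> \pi_Q a = \pi_Q b.
Proof. by move=> rab; apply/eqmodP/asboolP => e re _ _ _; exact: re. Qed.

Definition gquot_lift {Z : Type} (f : T -> Z) (q : Q) : Z := f (repr q).

Section Lift.
Context {Z : Type} (f : T -> Z) (f_inv : forall a b, r a b -> f a = f b).

Lemma gquot_liftE a : gquot_lift f (\pi_Q a) = f a.
Proof.
have /eqmodP/asboolP eq_cl := reprK (\pi_Q a : Q).
by apply: (eq_cl (fun a b => f a = f b)) => // x y z -> ->.
Qed.
End Lift.

Lemma gquot_lift_continuous {Z : topologicalType} (f : T -> Z) :
  continuous f -> (forall a b, r a b -> f a = f b) -> continuous (gquot_lift f).
Proof.
move=> cf f_inv; apply/(@quotient_continuous T Q).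
suff -> : gquot_lift f \o \pi_Q = f by [].
by apply: funext => a /=; exact: gquot_liftE.
Qed.

Lemma gquot_compact : compact [set: T] -> compact [set: Q].
Proof.
move=> cT; have -> : [set: Q] = \pi_Q @` [set: T].
  by apply/seteqP; split => // q _; exists (repr q); rewrite ?reprK.
apply: continuous_compact => //; apply: continuous_subspaceT => a aT.
exact: (@pi_continuous T Q).
Qed.
End GeneratedQuotient.

Lemma compact_set_type (X : topologicalType) (A : set X) :
  compact A -> compact [set: set_type A].
Proof.
move=> cA; have [A0|/set0P[a0 Aa0]] := eqVneq A set0.
  suff -> : [set: set_type A] = set0 by exact: compact0.
  by apply/seteqP; split => // -[x Ax]; exfalso; move: Ax; rewrite inE A0.
pose retract (x : X) : set_type A :=
  if pselect (A x) is left Ax then exist _ x (mem_set Ax)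
  else exist _ a0 (mem_set Aa0).
have retractK : cancel val retract.
  move=> [y Ay]; rewrite /retract /=; case: pselect => [Ay'|nAy].
    by congr exist; exact: Prop_irrelevance.
  by case: nAy; rewrite -inE.
have -> : [set: set_type A] = retract @` A.
  apply/seteqP; split => // y _; exists (val y); last exact: retractK.
  by case: y => y /=; rewrite inE.
apply: continuous_compact => //; apply/subspace_sigL_continuousP.
have -> : sigL A retract = id by apply: funext => y; rewrite /sigL /= retractK.
by move=> x; exact: cvg_id.
Qed.

Section CompactEmbeddings.
Context {Z : topologicalType} (Z_hausdorff : hausdorff_space Z).

Lemma continuous_factor_inj (A B : topologicalType) (a : A -> Z) (b : B -> Z)
    (h : A -> B) : continuous a -> continuous b -> compact [set: B] ->
  injective b -> (forall x, b (h x) = a x) -> continuous h.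
Proof.
move=> ca cb cB b_inj bh; apply/continuous_closedP => C cC.
have /(compact_closed Z_hausdorff) cbC : compact (b @` C).
  apply: continuous_compact; last exact: subclosed_compact cC cB _.
  by apply: continuous_subspaceT => y; exact: cb.
suff -> : h @^-1` C = a @^-1` (b @` C).
  by apply: preimage_closed; [move=> x _; exact: ca|exact: cbC].
apply/seteqP; split => x /=; first by move=> Chx; exists (h x).
by move=> [y Cy]; rewrite -bh => /b_inj <-.
Qed.

Lemma homeomorphic_of_same_image (X Y : topologicalType) (f : X -> Z) (g : Y -> Z) :
  continuous f -> continuous g -> injective f -> injective g ->
  compact [set: X] -> compact [set: Y] ->
  (forall x, exists y, g y = f x) -> (forall y, exists x, f x = g y) ->
  homeomorphic X Y.
Proof.
move=> cf cg f_inj g_inj cX cY /choice[u gu] /choice[v fv].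
have uK : cancel u v by move=> x; apply: f_inj; rewrite fv gu.
have vK : cancel v u by move=> y; apply: g_inj; rewrite gu fv.
exists u, v; split => //.
- exact: (continuous_factor_inj cf cg cY g_inj gu).
- exact: (continuous_factor_inj cg cf cX f_inj fv).
Qed.
End CompactEmbeddings.

Lemma continuous_mx (T K : topologicalType) m n (f : T -> 'M[K]_(m, n)) (x : T) :
  (forall i j, {for x, continuous (fun y => f y i j)}) -> {for x, continuous f}.
Proof.
move=> fc A [P Px sPA]; rewrite nbhs_simpl /=.
have : \forall y \near x, forall i j, P i j (f y i j).
  by apply: filter_forall => i; apply: filter_forall => j; exact: fc i j _ (Px i j).
by apply: filterS => y h; apply: sPA.
Qed.

Section RealFieldSigns.
Variable R : realFieldType.
Implicit Types (d e : bool) (x y p q : R).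

Lemma sqr_eq_sign x y : x ^+ 2 = y ^+ 2 -> exists e, x = (-1) ^+ e * y.
Proof.
move/eqP; rewrite eqf_sqr => /orP[]/eqP->; first by exists false; rewrite mul1r.
by exists true; rewrite mulN1r.
Qed.

Lemma sign_mul_eq e x y x' y' :
  x != 0 -> x' = (-1) ^+ e * x -> x' * y' = x * y -> y' = (-1) ^+ e * y.
Proof.
move=> x_neq0 -> exy; apply: (mulfI x_neq0).
have ss : (-1) ^+ e * (-1) ^+ e = 1 :> R by rewrite -expr2 sqrr_sign.
rewrite mulrCA -exy; transitivity ((-1) ^+ e * (-1) ^+ e * (x * y')).
  by rewrite ss mul1r.
by ring.
Qed.

Lemma outer_eq_sign (b0 b1 b2 c0 c1 c2 : R) :
  c0 ^+ 2 = b0 ^+ 2 -> c1 ^+ 2 = b1 ^+ 2 -> c2 ^+ 2 = b2 ^+ 2 ->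
  c0 * c1 = b0 * b1 -> c0 * c2 = b0 * b2 -> c1 * c2 = b1 * b2 ->
  exists e, [/\ c0 = (-1) ^+ e * b0, c1 = (-1) ^+ e * b1 & c2 = (-1) ^+ e * b2].
Proof.
move=> e0 e1 e2 e01 e02 e12.
have sqr0 x y : x ^+ 2 = y ^+ 2 -> y = 0 -> x = 0.
  by move=> exy y0; apply/eqP; rewrite -sqrf_eq0 exy y0 expr0n.
have [b00|b0_neq0] := eqVneq b0 0; last first.
  have [e c0E] := sqr_eq_sign e0; exists e.
  by split; [|exact: sign_mul_eq c0E e01|exact: sign_mul_eq c0E e02].
rewrite (sqr0 _ _ e0 b00) b00.
have [b10|b1_neq0] := eqVneq b1 0; last first.
  have [e c1E] := sqr_eq_sign e1; exists e.
  by split; [rewrite mulr0|exact: c1E|exact: sign_mul_eq c1E e12].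
rewrite (sqr0 _ _ e1 b10) b10.
by have [e c2E] := sqr_eq_sign e2; exists e; rewrite mulr0.
Qed.

Definition csqr_re p q := p ^+ 2 - q ^+ 2.
Definition csqr_im p q := 2 * p * q.

Lemma csqr_norm p q : (p ^+ 2 + q ^+ 2) ^+ 2 = csqr_re p q ^+ 2 + csqr_im p q ^+ 2.
Proof. by rewrite /csqr_re /csqr_im; ring. Qed.

Lemma csqr_eq_sign p q p' q' :
  csqr_re p' q' = csqr_re p q -> csqr_im p' q' = csqr_im p q ->
  exists e, p' = (-1) ^+ e * p /\ q' = (-1) ^+ e * q.
Proof.
move=> e_re e_im.
have e_pq : p' * q' = p * q.
  have two_neq0 : (2 : R) != 0 by rewrite pnatr_eq0.
  by apply: (mulfI two_neq0); move: e_im; rewrite /csqr_im !mulrA.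
have e_norm : p' ^+ 2 + q' ^+ 2 = p ^+ 2 + q ^+ 2.
  apply/eqP; rewrite -(eqrXn2 (_ : 0 < 2)%N) ?addr_ge0 ?sqr_ge0 //.
  by rewrite !csqr_norm e_re e_im.
have e_p : p' ^+ 2 = p ^+ 2 by move: e_re; rewrite /csqr_re; lra.
have e_q : q' ^+ 2 = q ^+ 2 by move: e_re; rewrite /csqr_re; lra.
have [p0|p_neq0] := eqVneq p 0.
  have [e q'E] := sqr_eq_sign e_q; exists e; split => //.
  by rewrite p0 mulr0; apply/eqP; rewrite -sqrf_eq0 e_p p0 expr0n.
have [e p'E] := sqr_eq_sign e_p.
by exists e; split; last exact: sign_mul_eq p'E e_pq.
Qed.

Lemma csqr_eq_conj_sign e p q p' q' :
  csqr_re p' q' = csqr_re p q -> csqr_im p' q' = (-1) ^+ e * csqr_im p q ->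
  exists d, p' = (-1) ^+ d * p /\ q' = (-1) ^+ (d (+) e) * q.
Proof.
move=> e_re e_im; have [d [p'E q'E]] : exists d,
    p' = (-1) ^+ d * p /\ (-1) ^+ e * q' = (-1) ^+ d * q.
  apply: csqr_eq_sign; rewrite /csqr_re /csqr_im in e_re e_im *.
    by rewrite exprMn sqrr_sign mul1r.
  transitivity ((-1) ^+ e * (2 * p' * q')); first by ring.
  by rewrite e_im mulrA -expr2 sqrr_sign mul1r.
exists d; split => //.
rewrite signr_addb; transitivity ((-1) ^+ e * ((-1) ^+ e * q')).
  by rewrite mulrA -expr2 sqrr_sign mul1r.
by rewrite q'E; ring.
Qed.
End RealFieldSigns.

Lemma csqr_surj (R : rcfType) (u w : R) :
  exists p q : R, csqr_re p q = u /\ csqr_im p q = w.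
Proof.
set rho := Num.sqrt (u ^+ 2 + w ^+ 2).
have rho_ge0 : 0 <= rho by rewrite sqrtr_ge0.
have rho2 : rho ^+ 2 = u ^+ 2 + w ^+ 2 by rewrite sqr_sqrtr // addr_ge0 ?sqr_ge0.
have hp : 0 <= (rho + u) / 2 by apply: divr_ge0 => //; nra.
have hm : 0 <= (rho - u) / 2 by apply: divr_ge0 => //; nra.
pose sg : R := if 0 <= w then 1 else -1.
have sg2 : sg ^+ 2 = 1 by rewrite /sg; case: ifP => _; rewrite ?sqrrN expr1n.
have two_neq0 : (2 : R) != 0 by rewrite pnatr_eq0.
exists (Num.sqrt ((rho + u) / 2)), (sg * Num.sqrt ((rho - u) / 2)).
rewrite /csqr_re /csqr_im exprMn sg2 mul1r !sqr_sqrtr //; split; first by field.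
transitivity (2 * sg * (Num.sqrt ((rho + u) / 2) * Num.sqrt ((rho - u) / 2))).
  by ring.
rewrite -sqrtrM //.
have -> : (rho + u) / 2 * ((rho - u) / 2) = (w / 2) ^+ 2.
  transitivity ((rho ^+ 2 - u ^+ 2) / 4); first by field.
  by rewrite rho2; field.
rewrite sqrtr_sqr /sg; case: ifP => w_ge0.
  by rewrite ger0_norm ?divr_ge0 //; field.
rewrite ltr0_norm; last by rewrite pmulr_llt0 ?invr_gt0 // ltNge w_ge0.
by field.
Qed.

Section NineVectors.
Variable R : rcfType.

(* Coordinates on R^3 x Sym_3: a vector, then the entries 00, 11, 22, 01, 02, 12 of a
   symmetric matrix. *)
Definition vec9 (x0 x1 x2 x3 x4 x5 x6 x7 x8 : R) : 'rV[R]_9 :=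
  \row_(i < 9) nth 0 [:: x0; x1; x2; x3; x4; x5; x6; x7; x8] i.

Lemma vec9_inj (x0 x1 x2 x3 x4 x5 x6 x7 x8 y0 y1 y2 y3 y4 y5 y6 y7 y8 : R) :
  vec9 x0 x1 x2 x3 x4 x5 x6 x7 x8 = vec9 y0 y1 y2 y3 y4 y5 y6 y7 y8 ->
  [/\ x0 = y0, x1 = y1, x2 = y2, x3 = y3 & [/\ x4 = y4, x5 = y5, x6 = y6, x7 = y7 & x8 = y8]].
Proof.
move/rowP => exy.
have e k : (k < 9)%N -> nth 0 [:: x0; x1; x2; x3; x4; x5; x6; x7; x8] k =
    nth 0 [:: y0; y1; y2; y3; y4; y5; y6; y7; y8] k.
  by move=> k_lt9; have := exy (Ordinal k_lt9); rewrite !mxE.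
by split; [exact: (e 0%N)|exact: (e 1%N)|exact: (e 2%N)|exact: (e 3%N)|
  split; [exact: (e 4%N)|exact: (e 5%N)|exact: (e 6%N)|exact: (e 7%N)|exact: (e 8%N)]].
Qed.

Definition join_vec (a0 a1 a2 b0 b1 b2 t : R) : 'rV[R]_9 :=
  let r := Num.sqrt (1 - t) in
  vec9 (r * a0) (r * a1) (r * a2) (t * (b0 * b0)) (t * (b1 * b1)) (t * (b2 * b2))
    (t * (b0 * b1)) (t * (b0 * b2)) (t * (b1 * b2)).

Lemma polar_decomp3 (x0 x1 x2 : R) : exists y0 y1 y2 : R,
  let s := Num.sqrt (x0 ^+ 2 + x1 ^+ 2 + x2 ^+ 2) in
  [/\ y0 ^+ 2 + y1 ^+ 2 + y2 ^+ 2 = 1 & [/\ x0 = s * y0, x1 = s * y1 & x2 = s * y2]].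
Proof.
set S := x0 ^+ 2 + x1 ^+ 2 + x2 ^+ 2.
have S_ge0 : 0 <= S by rewrite !addr_ge0 ?sqr_ge0.
have [S0|S_neq0] := eqVneq S 0.
  exists 1, 0, 0; rewrite /= S0 sqrtr0 !mul0r expr1n expr0n /= !addr0; split => //.
  have x_sqr0 (x : R) : 0 <= x ^+ 2 <= S -> x = 0.
    by rewrite S0 -eq_le => /eqP/esym/eqP; rewrite sqrf_eq0 => /eqP.
  have := sqr_ge0 x0; have := sqr_ge0 x1; have := sqr_ge0 x2.
  by split; apply: x_sqr0; rewrite sqr_ge0 /S; lra.
have s_gt0 : 0 < Num.sqrt S by rewrite sqrtr_gt0 lt_neqAle eq_sym S_neq0.
exists (x0 / Num.sqrt S), (x1 / Num.sqrt S), (x2 / Num.sqrt S); split.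
  by rewrite !expr_div_n -!mulrDl sqr_sqrtr // divff.
by split; rewrite mulrC divfK // gt_eqF.
Qed.
End NineVectors.

Section OrbitInvariant.
Variable R : rcfType.
Implicit Types p q : R.

Definition quartic_norm p0 q0 p1 q1 p2 q2 : R :=
  csqr_re p0 q0 ^+ 2 + csqr_im p0 q0 ^+ 2 + csqr_re p1 q1 ^+ 2 + csqr_im p1 q1 ^+ 2 +
  csqr_re p2 q2 ^+ 2 + csqr_im p2 q2 ^+ 2.

Definition orbit_inv p0 q0 p1 q1 p2 q2 : 'rV[R]_9 :=
  let N := quartic_norm p0 q0 p1 q1 p2 q2 in
  vec9 (csqr_re p0 q0 / Num.sqrt N) (csqr_re p1 q1 / Num.sqrt N)
    (csqr_re p2 q2 / Num.sqrt N) (csqr_im p0 q0 ^+ 2 / N) (csqr_im p1 q1 ^+ 2 / N)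
    (csqr_im p2 q2 ^+ 2 / N) (csqr_im p0 q0 * csqr_im p1 q1 / N)
    (csqr_im p0 q0 * csqr_im p2 q2 / N) (csqr_im p1 q1 * csqr_im p2 q2 / N).

Lemma quartic_normE p0 q0 p1 q1 p2 q2 : quartic_norm p0 q0 p1 q1 p2 q2 =
  (p0 ^+ 2 + q0 ^+ 2) ^+ 2 + (p1 ^+ 2 + q1 ^+ 2) ^+ 2 + (p2 ^+ 2 + q2 ^+ 2) ^+ 2.
Proof. by rewrite /quartic_norm !csqr_norm; ring. Qed.

Lemma quartic_norm_gt0 p0 q0 p1 q1 p2 q2 :
  p0 ^+ 2 + q0 ^+ 2 + p1 ^+ 2 + q1 ^+ 2 + p2 ^+ 2 + q2 ^+ 2 = 1 ->
  0 < quartic_norm p0 q0 p1 q1 p2 q2.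
Proof.
move=> sum1; rewrite quartic_normE; set m0 := p0 ^+ 2 + q0 ^+ 2.
set m1 := p1 ^+ 2 + q1 ^+ 2; set m2 := p2 ^+ 2 + q2 ^+ 2.
have sum_m : m0 + m1 + m2 = 1 by rewrite -sum1 /m0 /m1 /m2; ring.
have : 0 <= (m0 - m1) ^+ 2 + (m1 - m2) ^+ 2 + (m0 - m2) ^+ 2.
  by rewrite !addr_ge0 ?sqr_ge0.
have : 3 * (m0 ^+ 2 + m1 ^+ 2 + m2 ^+ 2) =
    (m0 + m1 + m2) ^+ 2 + ((m0 - m1) ^+ 2 + (m1 - m2) ^+ 2 + (m0 - m2) ^+ 2).
  by ring.
rewrite sum_m expr1n; lra.
Qed.

Lemma orbit_inv_sign (s0 t0 s1 t1 s2 t2 d : R) p0 q0 p1 q1 p2 q2 :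
  s0 ^+ 2 = 1 -> t0 ^+ 2 = 1 -> s1 ^+ 2 = 1 -> t1 ^+ 2 = 1 -> s2 ^+ 2 = 1 ->
  t2 ^+ 2 = 1 -> s0 * t0 = d -> s1 * t1 = d -> s2 * t2 = d ->
  orbit_inv (s0 * p0) (t0 * q0) (s1 * p1) (t1 * q1) (s2 * p2) (t2 * q2) =
  orbit_inv p0 q0 p1 q1 p2 q2.
Proof.
move=> s0_2 t0_2 s1_2 t1_2 s2_2 t2_2 d0 d1 d2.
have d2_1 : d ^+ 2 = 1 by rewrite -d0 exprMn s0_2 t0_2 mulr1.
have re_sign s t p q : s ^+ 2 = 1 -> t ^+ 2 = 1 -> csqr_re (s * p) (t * q) = csqr_re p q.
  by move=> s_2 t_2; rewrite /csqr_re !exprMn s_2 t_2 !mul1r.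
have im_sign s t p q : csqr_im (s * p) (t * q) = s * t * csqr_im p q.
  by rewrite /csqr_im; ring.
have dd x y : d * x * (d * y) = x * y.
  by transitivity (d ^+ 2 * (x * y)); [ring|rewrite d2_1 mul1r].
have dd2 x : (d * x) ^+ 2 = x ^+ 2 by rewrite expr2 dd -expr2.
by rewrite /orbit_inv /quartic_norm !re_sign // !im_sign d0 d1 d2 !dd2 !dd.
Qed.

Lemma orbit_inv_scale c p0 q0 p1 q1 p2 q2 : c != 0 ->
  orbit_inv (c * p0) (c * q0) (c * p1) (c * q1) (c * p2) (c * q2) =
  orbit_inv p0 q0 p1 q1 p2 q2.
Proof.
move=> c_neq0; have c2_gt0 : 0 < c ^+ 2 by rewrite exprn_even_gt0.
have re_scale p q : csqr_re (c * p) (c * q) = c ^+ 2 * csqr_re p q.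
  by rewrite /csqr_re; ring.
have im_scale p q : csqr_im (c * p) (c * q) = c ^+ 2 * csqr_im p q.
  by rewrite /csqr_im; ring.
rewrite /orbit_inv /quartic_norm !re_scale !im_scale.
set N := _ + csqr_im p2 q2 ^+ 2.
have -> : (c ^+ 2 * csqr_re p0 q0) ^+ 2 + (c ^+ 2 * csqr_im p0 q0) ^+ 2 +
    (c ^+ 2 * csqr_re p1 q1) ^+ 2 + (c ^+ 2 * csqr_im p1 q1) ^+ 2 +
    (c ^+ 2 * csqr_re p2 q2) ^+ 2 + (c ^+ 2 * csqr_im p2 q2) ^+ 2 = (c ^+ 2) ^+ 2 * N.
  by rewrite /N; ring.
rewrite sqrtrM ?sqr_ge0 // sqrtr_sqr gtr0_norm //.
have [N0|N_neq0] := eqVneq N 0; first by rewrite N0 sqrtr0 !mulr0 !invr0 !mulr0.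
have sN_neq0 : Num.sqrt N != 0.
  by rewrite sqrtr_eq0 -ltNge lt_neqAle eq_sym N_neq0 /N !addr_ge0 ?sqr_ge0.
by congr vec9; field; rewrite ?N_neq0 ?sN_neq0 c_neq0.
Qed.

Lemma sqr_norm_div_sqrt p q (N : R) : 0 < N ->
  (p ^+ 2 + q ^+ 2) / Num.sqrt N =
  Num.sqrt ((csqr_re p q / Num.sqrt N) ^+ 2 + csqr_im p q ^+ 2 / N).
Proof.
move=> N_gt0; rewrite -[LHS]ger0_norm ?divr_ge0 ?addr_ge0 ?sqr_ge0 ?sqrtr_ge0 //.
by rewrite -sqrtr_sqr !expr_div_n sqr_sqrtr ?ltW // csqr_norm mulrDl.
Qed.

Lemma orbit_inv_inj (p0 q0 p1 q1 p2 q2 p0' q0' p1' q1' p2' q2' : R) :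
  p0 ^+ 2 + q0 ^+ 2 + p1 ^+ 2 + q1 ^+ 2 + p2 ^+ 2 + q2 ^+ 2 = 1 ->
  p0' ^+ 2 + q0' ^+ 2 + p1' ^+ 2 + q1' ^+ 2 + p2' ^+ 2 + q2' ^+ 2 = 1 ->
  orbit_inv p0' q0' p1' q1' p2' q2' = orbit_inv p0 q0 p1 q1 p2 q2 ->
  exists e : bool, [/\
    exists d : bool, p0' = (-1) ^+ d * p0 /\ q0' = (-1) ^+ (d (+) e) * q0,
    exists d : bool, p1' = (-1) ^+ d * p1 /\ q1' = (-1) ^+ (d (+) e) * q1 &
    exists d : bool, p2' = (-1) ^+ d * p2 /\ q2' = (-1) ^+ (d (+) e) * q2].
Proof.
move=> sum1 sum1' /vec9_inj[eA0 eA1 eA2 eB0 [eB1 eB2 eB01 eB02 eB12]].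
have N_gt0 := quartic_norm_gt0 sum1; have N'_gt0 := quartic_norm_gt0 sum1'.
move: (quartic_norm p0 q0 _ _ _ _) (quartic_norm p0' q0' _ _ _ _) N_gt0 N'_gt0
  eA0 eA1 eA2 eB0 eB1 eB2 eB01 eB02 eB12 => N N' N_gt0 N'_gt0.
move=> eA0 eA1 eA2 eB0 eB1 eB2 eB01 eB02 eB12.
(* The entries give |z_k|^2 / sqrt N for each k; summing over k gives 1 / sqrt N. *)
have eN : N' = N.
  have e_mod (p q p' q' : R) : csqr_re p' q' / Num.sqrt N' = csqr_re p q / Num.sqrt N ->
      csqr_im p' q' ^+ 2 / N' = csqr_im p q ^+ 2 / N ->
      (p' ^+ 2 + q' ^+ 2) / Num.sqrt N' = (p ^+ 2 + q ^+ 2) / Num.sqrt N.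
    by move=> eA eB; rewrite !sqr_norm_div_sqrt // eA eB.
  have split3 (a b c d f g s : R) :
      (a + b + c + d + f + g) / s = (a + b) / s + (c + d) / s + (f + g) / s.
    by rewrite -!mulrDl !addrA.
  have : 1 / Num.sqrt N' = 1 / Num.sqrt N.
    rewrite -[in LHS]sum1' -[in RHS]sum1 !split3.
    by rewrite (e_mod _ _ _ _ eA0 eB0) (e_mod _ _ _ _ eA1 eB1) (e_mod _ _ _ _ eA2 eB2).
  rewrite !mul1r => /invr_inj eS.
  by rewrite -(sqr_sqrtr (ltW N'_gt0)) eS sqr_sqrtr ?ltW.
have divIr (c x y : R) : 0 < c -> x / c = y / c -> x = y.
  by move=> c_gt0; apply: mulIf; rewrite invr_neq0 ?gt_eqF.
have sN_gt0 : 0 < Num.sqrt N by rewrite sqrtr_gt0.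
rewrite eN in eA0 eA1 eA2 eB0 eB1 eB2 eB01 eB02 eB12.
have [e [e0 e1 e2]] := outer_eq_sign (divIr _ _ _ N_gt0 eB0) (divIr _ _ _ N_gt0 eB1)
  (divIr _ _ _ N_gt0 eB2) (divIr _ _ _ N_gt0 eB01) (divIr _ _ _ N_gt0 eB02)
  (divIr _ _ _ N_gt0 eB12).
by exists e; split; apply: csqr_eq_conj_sign => //; exact: divIr _ _ _ sN_gt0 _.
Qed.

End OrbitInvariant.

Section JoinVectors.
Variable R : rcfType.

Lemma join_vec_inj (a0 a1 a2 b0 b1 b2 t a0' a1' a2' b0' b1' b2' t' : R) :
  a0 ^+ 2 + a1 ^+ 2 + a2 ^+ 2 = 1 -> a0' ^+ 2 + a1' ^+ 2 + a2' ^+ 2 = 1 ->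
  0 <= t <= 1 -> 0 <= t' <= 1 ->
  join_vec a0' a1' a2' b0' b1' b2' t' = join_vec a0 a1 a2 b0 b1 b2 t ->
  [/\ t' = t, t != 1 -> [/\ a0' = a0, a1' = a1 & a2' = a2] &
      t != 0 -> exists e : bool,
        [/\ b0' = (-1) ^+ e * b0, b1' = (-1) ^+ e * b1 & b2' = (-1) ^+ e * b2]].
Proof.
move=> a_unit a'_unit /andP[t_ge0 t_le1] /andP[t'_ge0 t'_le1].
move=> /vec9_inj[ea0 ea1 ea2 eb00 [eb11 eb22 eb01 eb02 eb12]].
have et : t' = t.
  have r2 : Num.sqrt (1 - t) ^+ 2 = 1 - t by rewrite sqr_sqrtr // subr_ge0.
  have r'2 : Num.sqrt (1 - t') ^+ 2 = 1 - t' by rewrite sqr_sqrtr // subr_ge0.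
  have : (Num.sqrt (1 - t') * a0') ^+ 2 + (Num.sqrt (1 - t') * a1') ^+ 2 +
      (Num.sqrt (1 - t') * a2') ^+ 2 = (Num.sqrt (1 - t) * a0) ^+ 2 +
      (Num.sqrt (1 - t) * a1) ^+ 2 + (Num.sqrt (1 - t) * a2) ^+ 2.
    by rewrite ea0 ea1 ea2.
  by rewrite !exprMn -!mulrDr a_unit a'_unit !mulr1 r2 r'2; lra.
rewrite et in ea0 ea1 ea2 eb00 eb11 eb22 eb01 eb02 eb12.
split => // [t_neq1|t_neq0].
  have r_neq0 : Num.sqrt (1 - t) != 0.
    by rewrite sqrtr_eq0 -ltNge subr_gt0 lt_neqAle t_neq1.
  by split; apply: (mulfI r_neq0).
by apply: outer_eq_sign; rewrite ?expr2; apply: (mulfI t_neq0).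
Qed.

Lemma orbit_inv_join_vec (p0 q0 p1 q1 p2 q2 : R) :
  0 < quartic_norm p0 q0 p1 q1 p2 q2 -> exists a0 a1 a2 b0 b1 b2 t : R,
  [/\ a0 ^+ 2 + a1 ^+ 2 + a2 ^+ 2 = 1, b0 ^+ 2 + b1 ^+ 2 + b2 ^+ 2 = 1, 0 <= t <= 1 &
      orbit_inv p0 q0 p1 q1 p2 q2 = join_vec a0 a1 a2 b0 b1 b2 t].
Proof.
rewrite /orbit_inv /quartic_norm.
set A0 := csqr_re p0 q0; set A1 := csqr_re p1 q1; set A2 := csqr_re p2 q2.
set B0 := csqr_im p0 q0; set B1 := csqr_im p1 q1; set B2 := csqr_im p2 q2.
set N := A0 ^+ 2 + B0 ^+ 2 + A1 ^+ 2 + B1 ^+ 2 + A2 ^+ 2 + B2 ^+ 2 => N_gt0.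
have [a0 [a1 [a2 [a_unit [eA0 eA1 eA2]]]]] := polar_decomp3 A0 A1 A2.
have [b0 [b1 [b2 [b_unit [eB0 eB1 eB2]]]]] := polar_decomp3 B0 B1 B2.
move: eA0 eA1 eA2 eB0 eB1 eB2.
set SA := A0 ^+ 2 + A1 ^+ 2 + A2 ^+ 2; set SB := B0 ^+ 2 + B1 ^+ 2 + B2 ^+ 2.
move=> eA0 eA1 eA2 eB0 eB1 eB2.
have eN : N = SA + SB by rewrite /N /SA /SB; ring.
have SA_ge0 : 0 <= SA by rewrite !addr_ge0 ?sqr_ge0.
have SB_ge0 : 0 <= SB by rewrite !addr_ge0 ?sqr_ge0.
have N_neq0 : N != 0 by rewrite gt_eqF.
exists a0, a1, a2, b0, b1, b2, (SB / N); split => //.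
  apply/andP; split; first by rewrite divr_ge0 // ltW.
  by rewrite ler_pdivrMr // mul1r eN lerDr.
rewrite /join_vec; have -> : 1 - SB / N = SA / N by rewrite eN; field; rewrite -eN.
have eA (x u : R) : x = Num.sqrt SA * u -> x / Num.sqrt N = Num.sqrt (SA / N) * u.
  by move=> ->; rewrite sqrtrM // sqrtrV ?ltW //; ring.
have eB (x y u v : R) : x = Num.sqrt SB * u -> y = Num.sqrt SB * v ->
    x * y / N = SB / N * (u * v).
  by move=> -> ->; rewrite -[in RHS](sqr_sqrtr SB_ge0); ring.
by congr vec9; rewrite ?expr2; (apply: eA || apply: eB).
Qed.

Lemma join_vec_orbit_inv (a0 a1 a2 b0 b1 b2 t : R) :
  a0 ^+ 2 + a1 ^+ 2 + a2 ^+ 2 = 1 -> b0 ^+ 2 + b1 ^+ 2 + b2 ^+ 2 = 1 -> 0 <= t <= 1 ->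
  exists p0 q0 p1 q1 p2 q2 : R,
  p0 ^+ 2 + q0 ^+ 2 + p1 ^+ 2 + q1 ^+ 2 + p2 ^+ 2 + q2 ^+ 2 = 1 /\
  orbit_inv p0 q0 p1 q1 p2 q2 = join_vec a0 a1 a2 b0 b1 b2 t.
Proof.
move=> a_unit b_unit /andP[t_ge0 t_le1].
set r := Num.sqrt (1 - t); set z := Num.sqrt t.
have r2 : r ^+ 2 = 1 - t by rewrite sqr_sqrtr // subr_ge0.
have z2 : z ^+ 2 = t by rewrite sqr_sqrtr.
(* Take square roots P_k + i Q_k of r a_k + i z b_k, then rescale onto the sphere. *)
have [P0 [Q0 [eA0 eB0]]] := csqr_surj (r * a0) (z * b0).
have [P1 [Q1 [eA1 eB1]]] := csqr_surj (r * a1) (z * b1).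
have [P2 [Q2 [eA2 eB2]]] := csqr_surj (r * a2) (z * b2).
have norm1 : quartic_norm P0 Q0 P1 Q1 P2 Q2 = 1.
  rewrite /quartic_norm eA0 eB0 eA1 eB1 eA2 eB2.
  transitivity (r ^+ 2 * (a0 ^+ 2 + a1 ^+ 2 + a2 ^+ 2) +
    z ^+ 2 * (b0 ^+ 2 + b1 ^+ 2 + b2 ^+ 2)); first by ring.
  by rewrite a_unit b_unit r2 z2 !mulr1 subrK.
set S := P0 ^+ 2 + Q0 ^+ 2 + P1 ^+ 2 + Q1 ^+ 2 + P2 ^+ 2 + Q2 ^+ 2.
have S_gt0 : 0 < S.
  move: norm1; rewrite quartic_normE /S.
  have := sqr_ge0 P0; have := sqr_ge0 Q0; have := sqr_ge0 P1.
  have := sqr_ge0 Q1; have := sqr_ge0 P2; have := sqr_ge0 Q2.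
  nra.
pose c := (Num.sqrt S)^-1.
have c_neq0 : c != 0 by rewrite invr_neq0 // gt_eqF // sqrtr_gt0.
exists (c * P0), (c * Q0), (c * P1), (c * Q1), (c * P2), (c * Q2); split.
  transitivity (c ^+ 2 * S); first by rewrite /S; ring.
  by rewrite exprVn sqr_sqrtr ?ltW // mulVf // gt_eqF.
rewrite orbit_inv_scale // /orbit_inv norm1 sqrtr1 !divr1 eA0 eB0 eA1 eB1 eA2 eB2.
have zz x y : z * x * (z * y) = t * (x * y) by rewrite -z2; ring.
by rewrite /join_vec !expr2 !zz.
Qed.
End JoinVectors.

Lemma big_ord3E (V : nmodType) (f : 'I_3 -> V) :
  \sum_(i < 3) f i = f (inord 0) + f (inord 1) + f (inord 2).
Proof.
rewrite !big_ord_recr big_ord0 /= add0r.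
by congr (_ + _ + _); congr f; apply/val_inj; rewrite /= inordK.
Qed.

Lemma big_ord6E (V : nmodType) (f : 'I_6 -> V) : \sum_(i < 6) f i =
  f (inord 0) + f (inord 1) + f (inord 2) + f (inord 3) + f (inord 4) + f (inord 5).
Proof.
rewrite !big_ord_recr big_ord0 /= add0r.
by congr (_ + _ + _ + _ + _ + _); congr f; apply/val_inj; rewrite /= inordK.
Qed.

Section Entries.
Variable R : realType.

Definition entry n (v : Rn R n.+1) (k : nat) : R := v ord0 (inord k).

Definition seq_row n (s : seq R) : Rn R n := \row_(i < n) nth 0 s i.

Lemma entry_seq_row n (s : seq R) k : (k < n.+1)%N -> entry (seq_row n.+1 s) k = nth 0 s k.
Proof. by move=> k_lt; rewrite /entry mxE inordK. Qed.

Lemma entry_inj n (v w : Rn R n.+1) :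
  (forall k, (k < n.+1)%N -> entry v k = entry w k) -> v = w.
Proof.
by move=> evw; apply/rowP => i; have := evw i (ltn_ord i); rewrite /entry inord_val.
Qed.

Lemma entry_inj3 (v w : Rn R 3) :
  entry v 0 = entry w 0 -> entry v 1 = entry w 1 -> entry v 2 = entry w 2 -> v = w.
Proof. by move=> e0 e1 e2; apply: entry_inj => -[|[|[|]]]. Qed.

Lemma entryZ n (c : R) (v : Rn R n.+1) k : entry (c *: v) k = c * entry v k.
Proof. by rewrite /entry mxE. Qed.

Lemma entryN n (v : Rn R n.+1) k : entry (- v) k = - entry v k.
Proof. by rewrite /entry mxE. Qed.

Lemma entry_act_vec (eps : {ffun 'I_4 -> bool}) (v : Rn R 6) k : (k < 6)%N ->
  entry (act_vec R eps v) k = sgn R eps (inord (nth 0 [:: 0; 0; 0; 1; 1; 2] k)) *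
    sgn R eps (inord (nth 0 [:: 1; 2; 3; 2; 3; 3] k)) * entry v k.
Proof. by move=> k_lt6; rewrite /entry mxE /pair_fst /pair_snd !inordK. Qed.

Lemma seq_row3_sphere (a0 a1 a2 : R) :
  a0 ^+ 2 + a1 ^+ 2 + a2 ^+ 2 = 1 -> seq_row 3 [:: a0; a1; a2] \in sphere_set R 3.
Proof. by move=> a_unit; rewrite inE /sphere_set /= big_ord3E !mxE !inordK. Qed.

Definition sphere3_pt (a0 a1 a2 : R) (a_unit : a0 ^+ 2 + a1 ^+ 2 + a2 ^+ 2 = 1) :
  sphere R 3 := exist _ (seq_row 3 [:: a0; a1; a2]) (seq_row3_sphere a_unit).

Lemma seq_row6_sphere (p0 q0 p1 q1 p2 q2 : R) :
  p0 ^+ 2 + q0 ^+ 2 + p1 ^+ 2 + q1 ^+ 2 + p2 ^+ 2 + q2 ^+ 2 = 1 ->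
  seq_row 6 [:: p0; p1; p2; q2; q1; q0] \in sphere_set R 6.
Proof.
by move=> pq_unit; rewrite inE /sphere_set /= big_ord6E !mxE !inordK //= -pq_unit; ring.
Qed.

Definition sphere6_pt (p0 q0 p1 q1 p2 q2 : R)
    (pq_unit : p0 ^+ 2 + q0 ^+ 2 + p1 ^+ 2 + q1 ^+ 2 + p2 ^+ 2 + q2 ^+ 2 = 1) :
  sphere R 6 := exist _ (seq_row 6 [:: p0; p1; p2; q2; q1; q0]) (seq_row6_sphere pq_unit).

Lemma unit_intervalP (t : unit_interval R) : 0 <= (val t : R) <= 1.
Proof. by have := valP t; rewrite inE. Qed.

Definition unit_interval_pt (t : R) (t01 : 0 <= t <= 1) : unit_interval R :=
  exist _ (t : R^o) (mem_set t01).

Lemma entry_continuous n k : continuous (fun x : sphere R n.+1 => entry (val x) k).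
Proof.
move=> x; apply: (@continuous_comp _ _ _ (fun x : sphere R n.+1 => val x)
  (fun v : Rn R n.+1 => v ord0 (inord k))).
  exact: initial_continuous.
exact: coord_continuous.
Qed.

Lemma sphere3E (x : sphere R 3) :
  entry (val x) 0 ^+ 2 + entry (val x) 1 ^+ 2 + entry (val x) 2 ^+ 2 = 1.
Proof. by have := valP x; rewrite inE /sphere_set /= big_ord3E. Qed.

Lemma sphere6E (x : sphere R 6) : let v := val x in
  entry v 0 ^+ 2 + entry v 5 ^+ 2 + entry v 1 ^+ 2 + entry v 4 ^+ 2 +
  entry v 2 ^+ 2 + entry v 3 ^+ 2 = 1.
Proof.
by move=> v; have := valP x; rewrite inE /sphere_set /= big_ord6E => <-; rewrite /entry; ring.
Qed.

Lemma sphere_oppr n (x : sphere R n) : - val x \in sphere_set R n.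
Proof.
have := valP x; rewrite !inE /sphere_set /= => x_unit.
by rewrite -[RHS]x_unit; apply: eq_bigr => i _; rewrite mxE sqrrN.
Qed.

Definition sphere_opp n (x : sphere R n) : sphere R n := exist _ (- val x) (sphere_oppr x).

Lemma RP_pi_sign n (x y : sphere R n) (e : bool) :
  val y = (-1) ^+ e *: val x -> \pi_(RP R n) x = \pi_(RP R n) y.
Proof.
case: e => [|] /=; rewrite ?expr1 ?expr0 ?scaleN1r ?scale1r => exy.
  by apply: gquot_pi_eq.
by congr \pi_(RP R n); apply: val_inj.
Qed.
End Entries.

Section NineVectorContinuity.
Variables (R : realType) (T : topologicalType) (x : T).

Lemma continuous_vec9 (f0 f1 f2 f3 f4 f5 f6 f7 f8 : T -> R) :
  {for x, continuous f0} -> {for x, continuous f1} -> {for x, continuous f2} ->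
  {for x, continuous f3} -> {for x, continuous f4} -> {for x, continuous f5} ->
  {for x, continuous f6} -> {for x, continuous f7} -> {for x, continuous f8} ->
  {for x, continuous (fun t =>
    vec9 (f0 t) (f1 t) (f2 t) (f3 t) (f4 t) (f5 t) (f6 t) (f7 t) (f8 t))}.
Proof.
move=> c0 c1 c2 c3 c4 c5 c6 c7 c8; apply: continuous_mx => i j.
have -> : (fun t => vec9 (f0 t) (f1 t) (f2 t) (f3 t) (f4 t) (f5 t) (f6 t) (f7 t) (f8 t) i j) =
    (fun t => nth 0 [:: f0 t; f1 t; f2 t; f3 t; f4 t; f5 t; f6 t; f7 t; f8 t] j).
  by apply: funext => t; rewrite mxE.
by case: j => [[|[|[|[|[|[|[|[|[|j]]]]]]]]] hj].
Qed.

Lemma continuous_orbit_inv (p0 q0 p1 q1 p2 q2 : T -> R) :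
  {for x, continuous p0} -> {for x, continuous q0} -> {for x, continuous p1} ->
  {for x, continuous q1} -> {for x, continuous p2} -> {for x, continuous q2} ->
  0 < quartic_norm (p0 x) (q0 x) (p1 x) (q1 x) (p2 x) (q2 x) ->
  {for x, continuous (fun t => orbit_inv (p0 t) (q0 t) (p1 t) (q1 t) (p2 t) (q2 t))}.
Proof.
move=> cp0 cq0 cp1 cq1 cp2 cq2 N_gt0.
have c_sqr (f : T -> R) : {for x, continuous f} -> {for x, continuous (fun t => f t ^+ 2)}.
  move=> cf; have -> : (fun t => f t ^+ 2) = f \* f by apply: funext => t; rewrite expr2.
  exact: cvgM.
have c_re (p q : T -> R) : {for x, continuous p} -> {for x, continuous q} ->
    {for x, continuous (fun t => csqr_re (p t) (q t))}.
  by move=> cp cq; apply: cvgB; apply: c_sqr.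
have c_im (p q : T -> R) : {for x, continuous p} -> {for x, continuous q} ->
    {for x, continuous (fun t => csqr_im (p t) (q t))}.
  by move=> cp cq; apply: cvgM => //; apply: cvgM => //; exact: cvg_cst.
have cN : {for x, continuous (fun t =>
    quartic_norm (p0 t) (q0 t) (p1 t) (q1 t) (p2 t) (q2 t))}.
  by repeat apply: cvgD; apply: c_sqr; first [exact: c_re | exact: c_im].
have cNV : {for x, continuous (fun t =>
    (quartic_norm (p0 t) (q0 t) (p1 t) (q1 t) (p2 t) (q2 t))^-1)}.
  by apply: cvgV => //; rewrite gt_eqF.
have cSV : {for x, continuous (fun t =>
    (Num.sqrt (quartic_norm (p0 t) (q0 t) (p1 t) (q1 t) (p2 t) (q2 t)))^-1)}.
  apply: cvgV; first by rewrite gt_eqF ?sqrtr_gt0.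
  exact: continuous_comp cN (@sqrt_continuous _ _).
apply: continuous_vec9.
- exact: cvgM (c_re _ _ cp0 cq0) cSV.
- exact: cvgM (c_re _ _ cp1 cq1) cSV.
- exact: cvgM (c_re _ _ cp2 cq2) cSV.
- exact: cvgM (c_sqr _ (c_im _ _ cp0 cq0)) cNV.
- exact: cvgM (c_sqr _ (c_im _ _ cp1 cq1)) cNV.
- exact: cvgM (c_sqr _ (c_im _ _ cp2 cq2)) cNV.
- exact: cvgM (cvgM (c_im _ _ cp0 cq0) (c_im _ _ cp1 cq1)) cNV.
- exact: cvgM (cvgM (c_im _ _ cp0 cq0) (c_im _ _ cp2 cq2)) cNV.
- exact: cvgM (cvgM (c_im _ _ cp1 cq1) (c_im _ _ cp2 cq2)) cNV.
Qed.
End NineVectorContinuity.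

Section OrbitSpaceEmbedding.
Variable R : realType.
Local Notation RP5 := (RP R 6).

(* Entries 0..5 are x01, x02, x03, x12, x13, x23; the pairs of arguments of
   orbit_inv are (x01, x23), (x02, x13), (x03, x12). *)
Definition orbit_invv (v : Rn R 6) : 'rV[R]_9 :=
  orbit_inv (entry v 0) (entry v 5) (entry v 1) (entry v 4) (entry v 2) (entry v 3).

Lemma orbit_invvN (v : Rn R 6) : orbit_invv (- v) = orbit_invv v.
Proof.
rewrite /orbit_invv !entryN.
have m1 x : - x = -1 * x :> R by rewrite mulN1r.
rewrite [- entry v 0]m1 [- entry v 1]m1 [- entry v 2]m1.
rewrite [- entry v 3]m1 [- entry v 4]m1 [- entry v 5]m1.
by apply: (orbit_inv_sign (d := 1)); rewrite ?sqrrN ?expr1n ?mulN1r ?opprK.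
Qed.

Lemma orbit_invv_act eps (v : Rn R 6) : orbit_invv (act_vec R eps v) = orbit_invv v.
Proof.
rewrite /orbit_invv !entry_act_vec //=.
set s := sgn R eps; have s2 i : s i ^+ 2 = 1 by rewrite /s /sgn sqrr_sign.
apply: (orbit_inv_sign (d := s (inord 0) * s (inord 1) * (s (inord 2) * s (inord 3))));
  by rewrite ?exprMn ?s2 ?mulr1 //; ring.
Qed.

Definition eps_of_bits (b0 b1 b2 b3 : bool) : {ffun 'I_4 -> bool} :=
  [ffun i : 'I_4 => nth false [:: b0; b1; b2; b3] i].

Lemma sgn_eps_of_bits b0 b1 b2 b3 i : (i < 4)%N ->
  sgn R (eps_of_bits b0 b1 b2 b3) (inord i) = (-1) ^+ nth false [:: b0; b1; b2; b3] i.
Proof. by move=> i_lt4; rewrite /sgn ffunE inordK. Qed.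

Lemma orbit_invv_inj (x y : sphere R 6) : orbit_invv (val x) = orbit_invv (val y) ->
  exists eps (b : bool), act_vec R eps (val x) = (-1) ^+ b *: val y.
Proof.
move=> /esym /(orbit_inv_inj (sphere6E x) (sphere6E y)).
move=> [e [[d0 [p0 q0]] [d1 [p1 q1]] [d2 [p2 q2]]]].
(* The sign pattern found by orbit_inv_inj is realised by eps = (0, E+d0, E+d1, E+d2)
   followed by the antipodal map (-1)^E. *)
set E := d0 (+) d1 (+) d2 (+) e.
exists (eps_of_bits false (E (+) d0) (E (+) d1) (E (+) d2)), E.
apply: entry_inj => k k_lt6; rewrite entry_act_vec // entryZ !sgn_eps_of_bits;
  try by case: k k_lt6 => [|[|[|[|[|[|]]]]]].
move: p0 q0 p1 q1 p2 q2; rewrite {}/E.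
case: k k_lt6 => [|[|[|[|[|[|k]]]]]] //= _.
all: by case: d0 d1 d2 e => [] [] [] [] /= h0 h5 h1 h4 h2 h3;
  rewrite ?h0 ?h5 ?h1 ?h4 ?h2 ?h3; ring.
Qed.

Definition RP5_inv : RP5 -> 'rV[R]_9 :=
  gquot_lift (fun x : sphere R 6 => orbit_invv (val x)).

Lemma orbit_invv_antipode (x y : sphere R 6) :
  val y = - val x -> orbit_invv (val x) = orbit_invv (val y).
Proof. by move=> ->; rewrite orbit_invvN. Qed.

Lemma RP5_invE (x : sphere R 6) : RP5_inv (\pi_RP5 x) = orbit_invv (val x).
Proof. exact: gquot_liftE orbit_invv_antipode _. Qed.

Lemma RP5_inv_act (q q' : RP5) : act_rel R q q' -> RP5_inv q = RP5_inv q'.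
Proof. by move=> [eps [x [y [<- <- exy]]]]; rewrite !RP5_invE exy orbit_invv_act. Qed.

Definition orbit_emb : orbit_space R -> 'rV[R]_9 := gquot_lift RP5_inv.

Lemma orbit_embE (x : sphere R 6) :
  orbit_emb (\pi_(orbit_space R) (\pi_RP5 x)) = orbit_invv (val x).
Proof. by rewrite /orbit_emb (gquot_liftE RP5_inv_act) RP5_invE. Qed.

Lemma orbit_space_pi_surj (o : orbit_space R) :
  exists x : sphere R 6, o = \pi_(orbit_space R) (\pi_RP5 x).
Proof. by exists (repr (repr o)); rewrite !reprK. Qed.

Lemma orbit_emb_continuous : continuous orbit_emb.
Proof.
apply: gquot_lift_continuous RP5_inv_act.
apply: gquot_lift_continuous orbit_invv_antipode => x.
exact: continuous_orbit_inv (@entry_continuous R 5 0 x) (@entry_continuous R 5 5 x)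
  (@entry_continuous R 5 1 x) (@entry_continuous R 5 4 x) (@entry_continuous R 5 2 x)
  (@entry_continuous R 5 3 x) (quartic_norm_gt0 (sphere6E x)).
Qed.

Lemma orbit_emb_inj : injective orbit_emb.
Proof.
move=> o o'; have [x ->] := orbit_space_pi_surj o; have [y ->] := orbit_space_pi_surj o'.
rewrite !orbit_embE => /orbit_invv_inj[eps [b exy]].
apply: gquot_pi_eq; case: b exy => exy.
  exists eps, x, (sphere_opp y); split => //.
    by apply/esym/(RP_pi_sign (e := true)); rewrite /= expr1 scaleN1r.
  by rewrite exy /= expr1 scaleN1r.
by exists eps, x, y; rewrite exy expr0 scale1r.
Qed.
End OrbitSpaceEmbedding.

Section JoinEmbedding.
Variable R : realType.
Local Notation S2 := (sphere R 3).
Local Notation RP2 := (RP R 3).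
Local Notation I := (unit_interval R).
Local Notation J := (join R S2 RP2).

Definition RP_outer (i j : nat) : RP2 -> R :=
  gquot_lift (fun x : S2 => entry (val x) i * entry (val x) j).

Lemma RP_outer_inv i j (x y : S2) : val y = - val x ->
  entry (val x) i * entry (val x) j = entry (val y) i * entry (val y) j.
Proof. by move=> ->; rewrite !entryN mulrNN. Qed.

Lemma RP_outerE i j (x : S2) : RP_outer i j (\pi_RP2 x) = entry (val x) i * entry (val x) j.
Proof. exact: gquot_liftE (@RP_outer_inv i j) _. Qed.

Lemma RP_outer_continuous i j : continuous (RP_outer i j).
Proof.
apply: gquot_lift_continuous (@RP_outer_inv i j) => x.
exact: cvgM (@entry_continuous R 2 i x) (@entry_continuous R 2 j x).
Qed.

Definition join_emb_prod (p : S2 * (RP2 * I)) : 'rV[R]_9 :=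
  vec9 (Num.sqrt (1 - val p.2.2) * entry (val p.1) 0)
    (Num.sqrt (1 - val p.2.2) * entry (val p.1) 1)
    (Num.sqrt (1 - val p.2.2) * entry (val p.1) 2)
    (val p.2.2 * RP_outer 0 0 p.2.1) (val p.2.2 * RP_outer 1 1 p.2.1)
    (val p.2.2 * RP_outer 2 2 p.2.1) (val p.2.2 * RP_outer 0 1 p.2.1)
    (val p.2.2 * RP_outer 0 2 p.2.1) (val p.2.2 * RP_outer 1 2 p.2.1).

Lemma join_emb_prodE (a b : S2) (t : I) : join_emb_prod (a, (\pi_RP2 b, t)) =
  join_vec (entry (val a) 0) (entry (val a) 1) (entry (val a) 2)
    (entry (val b) 0) (entry (val b) 1) (entry (val b) 2) (val t).
Proof. by rewrite /join_emb_prod /join_vec !RP_outerE. Qed.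

Lemma join_emb_prod_inv p p' : join_rel R S2 RP2 p p' -> join_emb_prod p = join_emb_prod p'.
Proof.
rewrite /join_emb_prod => -[[-> [-> ->]]|[-> [-> ->]]]; first by rewrite !mul0r.
by rewrite subrr sqrtr0 !mul0r.
Qed.

Lemma join_emb_prod_continuous : continuous join_emb_prod.
Proof.
have cc (A B C : topologicalType) (f : A -> B) (g : B -> C) :
    continuous f -> continuous g -> continuous (g \o f).
  by move=> cf cg x; apply: continuous_comp; [exact: cf|exact: cg].
have c_fst (A B : topologicalType) : continuous (@fst A B) by move=> x; exact: cvg_fst.
have c_snd (A B : topologicalType) : continuous (@snd A B) by move=> x; exact: cvg_snd.
have c_val : continuous (fun t : I => val t : R) by exact: initial_continuous.
have ct : continuous (fun p : S2 * (RP2 * I) => val p.2.2 : R).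
  exact: cc _ _ _ _ _ (cc _ _ _ _ _ (c_snd _ _) (c_snd _ _)) c_val.
have ca k : continuous (fun p : S2 * (RP2 * I) => entry (val p.1) k).
  exact: cc _ _ _ _ _ (c_fst _ _) (@entry_continuous R 2 k).
have cb i j : continuous (fun p : S2 * (RP2 * I) => RP_outer i j p.2.1).
  have -> : (fun p : S2 * (RP2 * I) => RP_outer i j p.2.1) = RP_outer i j \o (fst \o snd).
    by [].
  exact: cc _ _ _ _ _ (cc _ _ _ _ _ (c_snd _ _) (c_fst _ _)) (@RP_outer_continuous i j).
have cr : continuous (fun p : S2 * (RP2 * I) => Num.sqrt (1 - val p.2.2 : R)).
  move=> p; apply: continuous_comp; last exact: sqrt_continuous.
  by apply: cvgB; [exact: cvg_cst|exact: ct].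
move=> p; exact: continuous_vec9 (cvgM (cr p) (ca 0%N p)) (cvgM (cr p) (ca 1%N p))
  (cvgM (cr p) (ca 2%N p)) (cvgM (ct p) (cb 0%N 0%N p)) (cvgM (ct p) (cb 1%N 1%N p))
  (cvgM (ct p) (cb 2%N 2%N p)) (cvgM (ct p) (cb 0%N 1%N p)) (cvgM (ct p) (cb 0%N 2%N p))
  (cvgM (ct p) (cb 1%N 2%N p)).
Qed.

Definition join_emb : J -> 'rV[R]_9 := gquot_lift join_emb_prod.

Lemma join_embE (a b : S2) (t : I) : join_emb (\pi_J (a, (\pi_RP2 b, t))) =
  join_vec (entry (val a) 0) (entry (val a) 1) (entry (val a) 2)
    (entry (val b) 0) (entry (val b) 1) (entry (val b) 2) (val t).
Proof. by rewrite /join_emb (gquot_liftE join_emb_prod_inv) join_emb_prodE. Qed.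

Lemma join_emb_continuous : continuous join_emb.
Proof. exact: gquot_lift_continuous join_emb_prod_continuous join_emb_prod_inv. Qed.

Lemma join_pi_surj (j : J) : exists (a b : S2) (t : I), j = \pi_J (a, (\pi_RP2 b, t)).
Proof.
have := reprK j; case: (repr j) => a [y t] <-.
by exists a, (repr y), t; rewrite reprK.
Qed.

Lemma join_emb_inj : injective join_emb.
Proof.
move=> j j'; have [a [b [t ->]]] := join_pi_surj j.
have [a' [b' [t' ->]]] := join_pi_surj j'; rewrite !join_embE.
move=> /(join_vec_inj (sphere3E a') (sphere3E a) (unit_intervalP t') (unit_intervalP t)).
move=> [et ea eb]; have {et}et : t = t' by apply: val_inj.
have ea' (t'_neq1 : val t' != 1 :> R) : a = a'.
  by have [e0 e1 e2] := ea t'_neq1; apply/val_inj/entry_inj3.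
have [t'0|t'_neq0] := eqVneq (val t' : R) 0.
  have t'_neq1 : val t' != 1 :> R by rewrite t'0 eq_sym oner_neq0.
  by apply: gquot_pi_eq; left; rewrite et t'0 (ea' t'_neq1).
have eb' : \pi_RP2 b' = \pi_RP2 b.
  have [e [e0 e1 e2]] := eb t'_neq0; apply: (RP_pi_sign (e := e)).
  by apply: entry_inj3; rewrite !entryZ.
have [t'1|t'_neq1] := eqVneq (val t' : R) 1.
  by apply: gquot_pi_eq; right; rewrite et t'1 eb'.
by rewrite et ea' // eb'.
Qed.
End JoinEmbedding.

Section Compactness.
Variable R : realType.

Lemma sphere_compact n : compact [set: sphere R n].
Proof.
apply: compact_set_type; apply: bounded_closed_compact.
  exists 1; split; first by rewrite num_real.
  move=> M M_gt1 v; rewrite /sphere_set /= => v_unit.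
  rewrite [leLHS]/Num.norm /= mx_normrE.
  apply: bigmax_le => [|[i j] _ /=]; first exact: ltW (lt_trans ltr01 M_gt1).
  rewrite (ord1 i); have : v ord0 j ^+ 2 <= 1.
    by rewrite -v_unit (bigD1 j) //= lerDl; apply: sumr_ge0 => k _; exact: sqr_ge0.
  rewrite -real_normK ?num_real // => vj_le1; apply/ltW/(le_lt_trans _ M_gt1).
  by have := normr_ge0 (v ord0 j); nra.
have sumsq_continuous : continuous (fun v : 'rV[R]_n => \sum_(i < n) v ord0 i ^+ 2).
  apply: continuous_big => [|i _ /=]; first exact: add_continuous.
  have -> : (fun w : 'rV[R]_n => w ord0 i ^+ 2) = (fun w => w ord0 i * w ord0 i).
    by apply: funext => w; rewrite expr2.
  by move=> v; exact: cvgM (@coord_continuous R 1 n ord0 i v)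
    (@coord_continuous R 1 n ord0 i v).
suff -> : sphere_set R n =
    (fun v : 'rV[R]_n => \sum_(i < n) v ord0 i ^+ 2) @^-1` [set x | x = 1].
  by apply: preimage_closed; [move=> v _; exact: sumsq_continuous|exact: closed_eq].
by [].
Qed.

Lemma RP_compact n : compact [set: RP R n].
Proof. exact/gquot_compact/sphere_compact. Qed.

Lemma unit_interval_compact : compact [set: unit_interval R].
Proof.
apply: compact_set_type; suff -> : unit_interval_set R = `[(0 : R), 1]%classic.
  exact: segment_compact.
by apply/seteqP; split => t; rewrite /= in_itv.
Qed.

Lemma join_compact : compact [set: join R (sphere R 3) (RP R 3)].
Proof.
apply: gquot_compact; rewrite -setXTT; apply: compact_setX; first exact: sphere_compact.
by rewrite -setXTT; apply: compact_setX; [exact: RP_compact|exact: unit_interval_compact].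
Qed.
End Compactness.

Section SameImage.
Variable R : realType.
Local Notation J := (join R (sphere R 3) (RP R 3)).

Lemma orbit_emb_in_join_image (o : orbit_space R) : exists j : J, join_emb j = orbit_emb o.
Proof.
have [x ->] := orbit_space_pi_surj o; rewrite orbit_embE /orbit_invv.
have [a0 [a1 [a2 [b0 [b1 [b2 [t [a_unit b_unit t01 ->]]]]]]]] :=
  orbit_inv_join_vec (quartic_norm_gt0 (sphere6E x)).
exists (\pi_J (sphere3_pt a_unit, (\pi_(RP R 3) (sphere3_pt b_unit), unit_interval_pt t01))).
by rewrite join_embE /= !entry_seq_row.
Qed.

Lemma join_emb_in_orbit_image (j : J) : exists o, orbit_emb o = join_emb j.
Proof.
have [a [b [t ->]]] := join_pi_surj j; rewrite join_embE.
have [p0 [q0 [p1 [q1 [p2 [q2 [pq_unit <-]]]]]]] :=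
  join_vec_orbit_inv (sphere3E a) (sphere3E b) (unit_intervalP t).
exists (\pi_(orbit_space R) (\pi_(RP R 6) (sphere6_pt pq_unit))).
by rewrite orbit_embE /orbit_invv /= !entry_seq_row.
Qed.
End SameImage.

Theorem mainTheorem18 (R : realType) :
  homeomorphic (orbit_space R) (join R (sphere R 3) (RP R 3)).
Proof.
apply: (homeomorphic_of_same_image _
  (@orbit_emb_continuous R) (@join_emb_continuous R)).
- exact: norm_hausdorff.
- exact: orbit_emb_inj.
- exact: join_emb_inj.
- exact/gquot_compact/RP_compact.
- exact: join_compact.
- exact: orbit_emb_in_join_image.
- exact: join_emb_in_orbit_image.
Qed.
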